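(* Let $M=\mathbb{R}/\mathbb{Z}$, $\pi_M:\mathbb{R}\to M$ the canonical projection, $I_0=\pi_M([\tfrac14,\tfrac34])$, and let $f_0:M\to M$ be a $\mathscr{C}^r$ diffeomorphism ($r\ge1$) with $f_0(x)=\tfrac12x+\tfrac14\bmod1$ for $x\in I_0$. Let $(\Omega,\mathcal{F},\mathbb{P})$ be a probability space, $\kappa:\Omega\to\mathbb{R}$ a measurable function with values in $[-1,1]$ $\mathbb{P}$-almost surely, $0<\epsilon<\tfrac18$, and $f_\omega(x)=f_0(x)+\epsilon\kappa(\omega)\bmod 1$. Let $\theta:\Omega\to\Omega$ be measurably invertible and nonsingular with respect to $\mathbb{P}$, and let $f^{(n)}_\omega=f_{\theta^{n-1}\omega}\circ\cdots\circ f_\omega$ ($f^{(0)}_\omega=\mathrm{id}_M$). Suppose that $\theta$ is non-historic. Then for $\mathbb{P}$-almost every $\omega$, the set of points of $I_0$ with historic behaviour at $\omega$ is empty (in particular, of zero Lebesgue measure).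
   Context: $\theta$ is nonsingular with respect to $\mathbb{P}$ if $\mathbb{P}(\theta^{-1}\Gamma)=1$ whenever $\Gamma$ is measurable with $\mathbb{P}(\Gamma)=1$. $\theta$ is historic if there is a measurable set $\Gamma$ with $\mathbb{P}(\Gamma)>0$ such that for each $\omega\in\Gamma$ there is an integrable function $b:\Omega\to\mathbb{R}$ for which $\lim_{n\to\infty}\frac1n\sum_{j=0}^{n-1}b(\theta^j\omega)$ does not exist; otherwise $\theta$ is non-historic. A point $x\in M$ has historic behaviour at $\omega$ if there is a continuous $\varphi:M\to\mathbb{R}$ such that $\lim_{n\to\infty}\frac1n\sum_{j=0}^{n-1}\varphi(f^{(j)}_\omega(x))$ does not exist. *)

From HB Require Import structures.
From mathcomp Require Import all_boot all_order all_algebra.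
From mathcomp Require Import all_classical all_reals all_analysis.
Set Implicit Arguments. Unset Strict Implicit. Unset Printing Implicit Defensive.
Import Order.TTheory GRing.Theory Num.Theory.
Import numFieldNormedType.Exports.
Local Open Scope classical_set_scope.
Local Open Scope ring_scope.

(* The circle M = R/Z is handled through lifts: a real x represents pi_M(x).
   A map of M is given by a lift F : R -> R; a function on M is a 1-periodic
   function on R. *)

Definition Cr {R : realType} (r : nat) (F : R -> R) : Prop :=
  (forall k, (k < r)%N -> forall x, derivable (iter k (fun g : R -> R => (derive1 (g : R -> R^o))) F) x 1) /\
  continuous (iter r (fun g : R -> R => (derive1 (g : R -> R^o))) F).

Definition circle_Cr_diffeo_lift {R : realType} (r : nat) (F : R -> R) : Prop :=
  Cr r F /\ (forall x, derive1 (F : R -> R^o) x != 0) /\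
  exists2 d : R, (d = 1 \/ d = -1) & forall x, F (x + 1) = F x + d.

Definition birkhoff_avg {X : Type} {Rr : realType} (T : X -> X) (g : X -> Rr)
  (x : X) (n : nat) : Rr :=
  (n%:R)^-1 * \sum_(j < n) g (iter j T x).

Definition nonsingular {d} {Om : measurableType d} {R : realType}
  (P : probability Om R) (theta : Om -> Om) : Prop :=
  forall G : set Om, measurable G -> P G = 1%E -> P (theta @^-1` G) = 1%E.

Definition measurably_invertible {d} {Om : measurableType d}
  (theta : Om -> Om) : Prop :=
  measurable_fun setT theta /\
  exists2 thinv : Om -> Om, measurable_fun setT thinv &
    cancel theta thinv /\ cancel thinv theta.

Definition historic {d} {Om : measurableType d} {R : realType}
  (P : probability Om R) (theta : Om -> Om) : Prop :=
  exists2 G : set Om, measurable G /\ (0 < P G)%E &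
    forall w, G w -> exists b : Om -> R,
      P.-integrable setT (EFin \o b) /\
      ~ (exists l : R, birkhoff_avg theta b w n @[n --> \oo] --> l).

Definition non_historic {d} {Om : measurableType d} {R : realType}
  (P : probability Om R) (theta : Om -> Om) : Prop := ~ historic P theta.

Definition rmap {Om : Type} {R : realType} (F0 : R -> R) (eps : R)
  (kappa : Om -> R) (w : Om) (x : R) : R := F0 x + eps * kappa w.

Fixpoint rcomp {Om : Type} {R : realType} (F0 : R -> R) (eps : R)
  (kappa : Om -> R) (theta : Om -> Om) (n : nat) (w : Om) (x : R) : R :=
  match n with
  | 0 => x
  | n.+1 => rmap F0 eps kappa (iter n theta w) (rcomp F0 eps kappa theta n w x)
  end.

(* x (representing pi_M(x)) has historic behaviour at w: there is a continuous
   phi : M -> R (= continuous 1-periodic phi : R -> R) whose averages along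
   the random orbit do not converge. *)
Definition historic_behaviour {Om : Type} {R : realType} (F0 : R -> R) (eps : R)
  (kappa : Om -> R) (theta : Om -> Om) (w : Om) (x : R) : Prop :=
  exists phi : R -> R, continuous phi /\ (forall y, phi (y + 1) = phi y) /\
    ~ (exists l : R,
         (fun n : nat => (n%:R)^-1 *
            \sum_(j < n) phi (rcomp F0 eps kappa theta j w x)) @ \oo --> l).

From HB Require Import structures.
From mathcomp Require Import all_boot all_order all_algebra.
From mathcomp Require Import all_classical all_reals all_analysis.
From mathcomp Require Import measurable_realfun ring lra.
Import Order.TTheory GRing.Theory Num.Theory Num.Def.
Import numFieldNormedType.Exports.
Local Open Scope classical_set_scope.
Local Open Scope ring_scope.

(* On I_0 the random map is x |-> x/2 + c(w) mod 1 with c(w) = 1/4 + eps kappa(w)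
   in [1/8, 3/8], so every orbit starting in I_0 stays there and is the orbit of
   a random affine contraction of ratio 1/2.  Hence, for j >= m, the j-th point
   of any such orbit is 2^-m-close to h_m(theta^j w), where h_m(w) is the point
   reached at time m by the orbit of 1/2 started at theta^-m w; h_m is a
   measurable function of w alone.  Birkhoff averages of phi along the orbit are
   therefore uniformly approximated by finite combinations of Birkhoff averages
   of the countably many indicators 1_{h_m in [i/N, (i+1)/N)}, which converge
   almost surely because theta is non-historic. *)

Section real_sequences.
Context {R : realType}.
Implicit Types u v : R^nat.

Lemma cvgn_cauchyP u : cvgn u <->
  forall k : nat, exists M, forall p q, (M <= p)%N -> (M <= q)%N ->
    `|u p - u q| < k.+1%:R^-1.
Proof.
split=> [/cvg_ex[l /cvgrPdist_lt ul] k|cu].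
  have e0 : 0 < k.+1%:R^-1 / 2 :> R by rewrite divr_gt0.
  have [M _ hM] := ul _ e0.
  exists M => p q pM qM; have := hM p pM; have := hM q qM.
  have := ler_distD l (u p) (u q); rewrite (distrC (u p) l).
  set e := k.+1%:R^-1; lra.
apply: cauchy_cvg; apply: cauchy_exP => e e0.
have [k _ ke] := near_infty_natSinv_lt (PosNum e0).
have [M hM] := cu k.
exists (u M); exists M => // n /= Mn; rewrite -ball_normE /=.
exact: lt_trans (hM M n (leqnn M) Mn) (ke k (leqnn k)).
Qed.

Lemma cvgn_approx u :
  (forall eta, 0 < eta ->
     exists2 v, cvgn v & \forall n \near \oo, `|u n - v n| <= eta) ->
  cvgn u.
Proof.
move=> approx; apply: cauchy_cvg; apply: cauchy_exP => e e0.
have e20 : 0 < e / 2 by rewrite divr_gt0.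
have [v /cvg_ex[l /cvgrPdist_lt vl] uv] := approx _ e20.
exists l; apply: filterS2 uv (vl _ e20) => n uvn vln.
rewrite /= -ball_normE /=.
have := ler_distD (v n) l (u n); rewrite (distrC (v n)); lra.
Qed.

Lemma is_cvgn_sum {I : Type} (s : seq I) (F : I -> R^nat) :
  (forall i, cvgn (F i)) -> cvgn (fun n => \sum_(i <- s) F i n).
Proof.
move=> cF; elim: s => [|i s IH].
  rewrite (_ : (fun n => _) = cst 0); first exact: is_cvg_cst.
  by apply/funext => n; rewrite big_nil.
rewrite (_ : (fun n => _) = F i + (fun n => \sum_(j <- s) F j n)).
  exact: is_cvgD.
by apply/funext => n; rewrite big_cons.
Qed.

Definition cesaro_mean u n : R := n%:R^-1 * \sum_(j < n) u j.

Lemma cesaro_meanB {I : Type} (s : seq I) u (a : I -> R) (v : I -> R^nat) n :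
  cesaro_mean u n - \sum_(i <- s) a i * cesaro_mean (v i) n =
  cesaro_mean (fun j => u j - \sum_(i <- s) a i * v i j) n.
Proof.
rewrite /cesaro_mean sumrB mulrBr; congr (_ - _).
rewrite exchange_big mulr_sumr; apply: eq_bigr => i _.
by rewrite mulrCA mulr_sumr.
Qed.

Lemma cesaro_mean_le u eta : 0 < eta ->
  (\forall j \near \oo, `|u j| <= eta) ->
  \forall n \near \oo, `|cesaro_mean u n| <= 2 * eta.
Proof.
move=> eta0 [m _ hu]; pose C := \sum_(j < m) `|u j|.
near=> n.
have mn : (m <= n)%N by near: n; exact: nbhs_infty_ge.
have n0 : 0 < n%:R :> R by rewrite ltr0n; near: n; exact: nbhs_infty_ge 1%N.
have Cn : C <= n%:R * eta.
  rewrite -ler_pdivrMr //; apply: ltW; apply: lt_le_trans (truncnS_gt _) _.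
  by rewrite ler_nat; near: n; exact: nbhs_infty_ge.
rewrite /cesaro_mean normrM ger0_norm ?invr_ge0 // mulrC ler_pdivrMr //.
rewrite -(big_mkord xpredT) (big_cat_nat (leq0n m) mn) /= big_mkord.
have head : `|\sum_(j < m) u j| <= C by exact: ler_norm_sum.
have tail : `|\sum_(m <= j < n) u j| <= n%:R * eta.
  apply: le_trans (ler_norm_sum _ _ _) _.
  apply: le_trans (@ler_sum_nat _ _ _ _ (fun=> eta) _) _ => [j /andP[mj _]|].
    exact: hu.
  rewrite sumr_const_nat -[eta *+ _]mulr_natl ler_wpM2r ?(ltW eta0) //.
  by rewrite ler_nat leq_subr.
have := ler_normD (\sum_(j < m) u j) (\sum_(m <= j < n) u j); lra.
Unshelve. all: by end_near.
Qed.

End real_sequences.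

Lemma compact_unif_continuous {R : realType} {f : R -> R} {A : set R} {eta : R} :
  continuous f -> compact A -> 0 < eta ->
  exists2 delta, 0 < delta &
    forall y z, A y -> `|y - z| < delta -> `|f y - f z| < eta.
Proof.
move=> cf /compact_near_coveringP cA eta0.
have eta20 : 0 < eta / 2 by rewrite divr_gt0.
have [N _ hN] : \forall n \near \oo, A `<=`
    [set y | forall z, `|y - z| < n.+1%:R^-1 -> `|f y - f z| < eta].
  apply: cA => x _.
  have /cvgrPdist_lt/(_ _ eta20)/nbhs_ballP[r /= r0 fr] := cf x.
  have r20 : 0 < r / 2 by rewrite divr_gt0.
  near=> y n => z /= yz.
  have xy : `|x - y| < r / 2.
    near: y; have := near_ball x _ r20; apply: filterS => t.
    by rewrite -ball_normE.
  have nr : n.+1%:R^-1 < r / 2.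
    by near: n; exact: near_infty_natSinv_lt (PosNum r20).
  set e := n.+1%:R^-1 in yz nr.
  have fy : `|f x - f y| < eta / 2 by apply: fr; rewrite -ball_normE /=; lra.
  have fz : `|f x - f z| < eta / 2.
    by apply: fr; rewrite -ball_normE /=; have := ler_distD y x z; lra.
  have := ler_distD (f x) (f y) (f z); rewrite (distrC (f y) (f x)); lra.
by exists N.+1%:R^-1 => // y z Ay; exact: hN N (leqnn N) y Ay z.
Unshelve. all: by end_near.
Qed.

Section step_functions.
Context {R : realType}.

Definition cell (N i : nat) : set R := [set` `[i%:R / N%:R, i.+1%:R / N%:R[].

Lemma in_cell N i (y : R) : (0 < N)%N -> 0 <= y ->
  (y \in cell N i) = (truncn (y * N%:R) == i).
Proof.
move=> N0 y0; have N0' : 0 < N%:R :> R by rewrite ltr0n.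
rewrite truncn_eq ?mulr_ge0 // /cell mem_setE in_itv /=.
by rewrite ler_pdivrMr // ltr_pdivlMr.
Qed.

Lemma truncn_div_dist N (y : R) : (0 < N)%N -> 0 <= y ->
  `|y - (truncn (y * N%:R))%:R / N%:R| < N%:R^-1.
Proof.
move=> N0 y0; have N0' : 0 < N%:R :> R by rewrite ltr0n.
have -> : y - (truncn (y * N%:R))%:R / N%:R =
          (y * N%:R - (truncn (y * N%:R))%:R) / N%:R.
  by field; rewrite pnatr_eq0 -lt0n.
rewrite normrM [`|_^-1|]ger0_norm ?invr_ge0 ?ler0n //.
rewrite -[ltRHS]mul1r ltr_pM2r ?invr_gt0 //.
have t_le : (truncn (y * N%:R))%:R <= y * N%:R.
  by rewrite truncn_le mulr_ge0 // ltW.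
have t_gt := truncnS_gt (y * N%:R).
by rewrite ltr_norml; apply/andP; split; lra.
Qed.

Lemma sum_cell_indic N (f : nat -> R) y : (0 < N)%N -> 0 <= y < 1 ->
  \sum_(i < N) f i * \1_(cell N i) y = f (truncn (y * N%:R)).
Proof.
move=> N0 /andP[y0 y1]; have N0' : 0 < N%:R :> R by rewrite ltr0n.
have tN : (truncn (y * N%:R) < N)%N.
  by rewrite truncn_lt_nat ?mulr_ge0 // -[ltRHS]mul1r ltr_pM2r.
rewrite (bigD1 (Ordinal tN)) //= big1 ?addr0 => [|i iN].
  by rewrite indicE in_cell // eqxx mulr1.
rewrite indicE in_cell // (_ : (_ == _) = false) ?mulr0 //.
by apply/negbTE; apply: contra iN => /eqP ti; apply/eqP/val_inj.
Qed.

Lemma cvgn_mean_shadow (phi : R -> R) (y : R^nat) (z : nat -> R^nat) :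
  continuous phi -> (forall j, 0 <= y j <= 1) ->
  (forall e, 0 < e -> exists m,
     \forall j \near \oo, `|y j - z m j| < e /\ 0 <= z m j < 1) ->
  (forall m N i, cvgn (cesaro_mean ((\1_(cell N i) : R -> R) \o z m))) ->
  cvgn (cesaro_mean (phi \o y)).
Proof.
move=> cphi y01 shadow cells; apply: cvgn_approx => eta eta0.
have eta20 : 0 < eta / 2 by rewrite divr_gt0.
have [delta delta0 phi_unif] :=
  compact_unif_continuous cphi (@segment_compact R 0 1) eta20.
have delta20 : 0 < delta / 2 by rewrite divr_gt0.
have [N' _ N'delta] := near_infty_natSinv_lt (PosNum delta20).
have [m zm] := shadow _ delta20.
pose N := N'.+1; pose a i := phi (i%:R / N%:R).
pose u j := phi (y j) - \sum_(i < N) a i * (\1_(cell N i) \o z m) j.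
exists (fun n => \sum_(i < N) a i * cesaro_mean (\1_(cell N i) \o z m) n).
  by apply: is_cvgn_sum => i; apply: is_cvgM; [exact: is_cvg_cst | exact: cells].
have u_small : \forall j \near \oo, `|u j| <= eta / 2.
  apply: filterS zm => j [yz /andP[z0 z1]].
  rewrite /u /= (sum_cell_indic _ a) ?z0 //.
  apply/ltW/phi_unif; first by rewrite /= in_itv /=; exact: y01.
  have := truncn_div_dist N (z m j) (ltn0Sn N') z0.
  have /= := N'delta N' (leqnn N').
  set t := (truncn _)%:R / _; set e := N'.+1%:R^-1 => Nd zt.
  have := ler_distD (z m j) (y j) t; lra.
apply: filterS (cesaro_mean_le u _ eta20 u_small) => n.
by rewrite cesaro_meanB => /le_trans; apply; lra.
Qed.

End step_functions.

Section measurable_cvgn.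
Context {d} {T : measurableType d} {R : realType}.

Lemma measurable_normr_lt (f : T -> R) (r : R) : measurable_fun setT f ->
  measurable [set w | `|f w| < r].
Proof.
move=> mf; have mnf := measurableT_comp (@normr_measurable R setT) mf.
rewrite -[X in measurable X]setTI.
have -> : [set w | `|f w| < r] = (fun w => `|f w|) @^-1` [set` `]-oo, r[].
  by apply/seteqP; split => w /=; rewrite in_itv.
exact: mnf measurableT _ (measurable_itv _).
Qed.

Lemma measurable_cvgn (u : (T -> R)^nat) :
  (forall n, measurable_fun setT (u n)) -> measurable [set w | cvgn (u ^~ w)].
Proof.
move=> mu.
have -> : [set w | cvgn (u ^~ w)] = \bigcap_k \bigcup_M
    \bigcap_(p in [set p | (M <= p)%N]) \bigcap_(q in [set q | (M <= q)%N])
      [set w | `|u p w - u q w| < k.+1%:R^-1].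
  apply/seteqP; split => w /=.
    move=> /cvgn_cauchyP cw k _; have [M hM] := cw k.
    by exists M => // p pM q qM; exact: hM.
  move=> cw; apply/cvgn_cauchyP => k; have [M _ hM] := cw k I.
  by exists M => p q pM qM; exact: hM.
apply: bigcapT_measurable => k; apply: bigcupT_measurable => M.
apply: bigcap_measurableType => p _; apply: bigcap_measurableType => q _.
by apply: measurable_normr_lt; exact: measurable_funB.
Qed.

End measurable_cvgn.

Section nonsingular_dynamics.
Context {d} {Om : measurableType d} {R : realType} (P : probability Om R).
Variable theta : Om -> Om.
Hypothesis mtheta : measurable_fun setT theta.

Lemma measurable_iter n : measurable_fun setT (iter n theta).
Proof.
elim: n => [|n IH]; [exact: measurable_id | exact: measurableT_comp mtheta IH].
Qed.

Lemma measurable_birkhoff_avg (b : Om -> R) n : measurable_fun setT b ->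
  measurable_fun setT (birkhoff_avg theta b ^~ n).
Proof.
move=> mb; apply: measurable_funM; first exact: measurable_cst.
by apply: measurable_sum => j; exact: measurableT_comp mb (measurable_iter j).
Qed.

Lemma non_historic_cvgn (b : Om -> R) : non_historic P theta ->
  P.-integrable setT (EFin \o b) ->
  {ae P, forall w, cvgn (birkhoff_avg theta b w)}.
Proof.
move=> nh ib.
have mb : measurable_fun setT b by case/integrableP: ib => /measurable_EFinP.
set G := ~` [set w | cvgn (birkhoff_avg theta b w)].
have mG : measurable G.
  by apply/measurableC/measurable_cvgn => n; exact: measurable_birkhoff_avg.
exists G; split => //; apply/eqP; rewrite eq_le measure_ge0 andbT leNgt.
apply/negP => PG; apply: nh; exists G => // w Gw.
by exists b; split => // /cvg_ex.
Qed.

Hypothesis ns : nonsingular P theta.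

Lemma ae_comp (Q : Om -> Prop) :
  {ae P, forall w, Q w} -> {ae P, forall w, Q (theta w)}.
Proof.
case=> N [mN PN0 QN].
have mN' : measurable (theta @^-1` ~` N).
  by rewrite -[X in measurable X]setTI; exact/mtheta/measurableC.
exists (~` (theta @^-1` ~` N)); split.
- exact: measurableC.
- have PC : P (~` N) = 1%E by rewrite probability_setC // PN0 sube0.
  by rewrite probability_setC // (ns _ (measurableC mN) PC) subee.
- by move=> w /= nQ; apply; exact: QN.
Qed.

Lemma ae_iter (Q : Om -> Prop) :
  {ae P, forall w, Q w} -> {ae P, forall w j, Q (iter j theta w)}.
Proof.
move=> aeQ; apply: ae_foralln; elim=> [//|j IH].
by apply: filterS (ae_comp (fun w => Q (iter j theta w)) IH) => w; rewrite iterSr.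
Qed.

End nonsingular_dynamics.

Lemma iter_cancel {T : Type} (f g : T -> T) n :
  cancel f g -> cancel (iter n f) (iter n g).
Proof. by move=> fK; elim: n => [//|n IH] x; rewrite iterSr /= fK IH. Qed.

Lemma iter_cancel_subn {T : Type} (f g : T -> T) m j x : cancel f g ->
  (m <= j)%N -> iter m g (iter j f x) = iter (j - m) f x.
Proof. by move=> fK mj; rewrite -{1}(subnK mj) addnC iterD iter_cancel. Qed.

Section affine_orbit.
Context {R : realType} {Om : Type} (theta : Om -> Om) (c : Om -> R).

Fixpoint aff_orbit (w : Om) (x : R) (n : nat) : R :=
  if n is n'.+1 then aff_orbit w x n' / 2 + c (iter n' theta w) else x.

Lemma aff_orbitD w x k n :
  aff_orbit w x (k + n) = aff_orbit (iter k theta w) (aff_orbit w x k) n.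
Proof.
elim: n => [|n IH] /=; first by rewrite addn0.
by rewrite addnS /= IH addnC iterD.
Qed.

Lemma aff_orbitB w x y n :
  aff_orbit w x n - aff_orbit w y n = (x - y) / 2 ^+ n.
Proof.
elim: n => [|n IH] /=; first by rewrite expr0 divr1.
rewrite (_ : _ - _ = (aff_orbit w x n - aff_orbit w y n) / 2); last by ring.
by rewrite IH exprS invfM mulrAC mulrA.
Qed.

Lemma aff_orbit_itv {w x a b} n :
  (forall j, a / 2 <= c (iter j theta w) <= b / 2) -> a <= x <= b ->
  a <= aff_orbit w x n <= b.
Proof.
move=> cw /andP[ax xb]; elim: n => [|n IH] /=; first by apply/andP.
move: IH (cw n) => /andP[? ?] /andP[? ?]; apply/andP; split; lra.
Qed.

Lemma aff_orbit_shadow {thinv : Om -> Om} {w x y a b} m j :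
  cancel theta thinv -> (forall j, a / 2 <= c (iter j theta w) <= b / 2) ->
  a <= x <= b -> a <= y <= b -> (m <= j)%N ->
  `|aff_orbit w x j - aff_orbit (iter m thinv (iter j theta w)) y m|
    <= (b - a) / 2 ^+ m /\
  a <= aff_orbit (iter m thinv (iter j theta w)) y m <= b.
Proof.
move=> thetaK cw x_ab y_ab mj; rewrite iter_cancel_subn //.
have cw' j' : a / 2 <= c (iter j' theta (iter (j - m) theta w)) <= b / 2.
  by rewrite -iterD; exact: cw.
split; last exact: aff_orbit_itv.
rewrite -{1}(subnK mj) aff_orbitD aff_orbitB normrM.
rewrite [`|_^-1|]ger0_norm ?invr_ge0 ?exprn_ge0 //.
apply: ler_wpM2r; first by rewrite invr_ge0 exprn_ge0.
move: (aff_orbit_itv (j - m) cw x_ab) y_ab => /andP[? ?] /andP[? ?].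
by rewrite ler_norml; apply/andP; split; lra.
Qed.

End affine_orbit.

Lemma measurable_aff_orbit {d} {Om : measurableType d} {R : realType}
    (theta : Om -> Om) (c : Om -> R) x n :
  measurable_fun setT theta -> measurable_fun setT c ->
  measurable_fun setT (fun w => aff_orbit theta c w x n).
Proof.
move=> mtheta mc; elim: n => [|n IH] /=; first exact: measurable_cst.
apply: measurable_funD.
  by apply: measurable_funM => //; exact: measurable_cst.
exact: measurableT_comp mc (measurable_iter _ mtheta n).
Qed.

Section circle_lift.
Context {R : realType}.

Lemma shift_int (G : R -> R) (d : R) : (forall x, G (x + 1) = G x + d) ->
  forall (k : int) y, G (y + k%:~R) = G y + k%:~R * d.
Proof.
move=> G1.
have Gn (n : nat) y : G (y + n%:R) = G y + n%:R * d.
  elim: n y => [|n IH] y; first by rewrite !addr0 mul0r addr0.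
  by rewrite -natr1 addrA G1 IH; ring.
case=> n y; first by rewrite Gn.
rewrite NegzE mulrNz -pmulrn.
by have := Gn n.+1 (y - n.+1%:R); rewrite subrK => ->; ring.
Qed.

Lemma lift_shift_int {F : R -> R} :
  (exists2 d : R, (d = 1 \/ d = -1) & forall x, F (x + 1) = F x + d) ->
  forall (k : int) y, exists k' : int, F (y + k%:~R) = F y + k'%:~R.
Proof.
move=> [d [->|->] F1] k y; rewrite (shift_int _ _ F1).
  by exists k; rewrite mulr1.
by exists (- k); rewrite mulrN1 mulrNz.
Qed.

Definition rtrans {Om : Type} (eps : R) (kappa : Om -> R) (w : Om) : R :=
  1/4 + eps * kappa w.

Lemma rcomp_aff_orbit {Om : Type} {F0 : R -> R} {eps} {kappa : Om -> R}
    {theta w x} :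
  (forall y, 1/4 <= y <= 3/4 -> exists k : int, F0 y = y / 2 + 1/4 + k%:~R) ->
  (forall (k : int) y, exists k' : int, F0 (y + k%:~R) = F0 y + k'%:~R) ->
  (forall j, 1/4/2 <= rtrans eps kappa (iter j theta w) <= 3/4/2) ->
  1/4 <= x <= 3/4 ->
  forall n, exists k : int, rcomp F0 eps kappa theta n w x =
    aff_orbit theta (rtrans eps kappa) w x n + k%:~R.
Proof.
move=> F0_I0 F0_shift cw x_I0.
elim=> [|n [k IH]] /=; first by exists 0; rewrite addr0.
rewrite /rmap IH.
have [k' ->] := F0_shift k (aff_orbit theta (rtrans eps kappa) w x n).
have [k0 ->] := F0_I0 _ (aff_orbit_itv _ _ n cw x_I0).
by exists (k0 + k'); rewrite /rtrans intrD; ring.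
Qed.

End circle_lift.

Section past_orbit.
Context {d} {Om : measurableType d} {R : realType}.
Variables (eps : R) (kappa : Om -> R) (theta thinv : Om -> Om).

Definition past_orbit m w : R :=
  aff_orbit theta (rtrans eps kappa) (iter m thinv w) (1/2) m.

Lemma ae_cvgn_past_orbit_cells (P : probability Om R) :
  measurable_fun setT kappa -> measurable_fun setT theta ->
  measurable_fun setT thinv -> non_historic P theta ->
  {ae P, forall w m N i,
    cvgn (birkhoff_avg theta (\1_(past_orbit m @^-1` cell N i) : Om -> R) w)}.
Proof.
move=> mkappa mtheta mthinv nh.
have mc : measurable_fun setT (rtrans eps kappa).
  apply: measurable_funD; first exact: measurable_cst.
  by apply: measurable_funM => //; exact: measurable_cst.
have mpast m : measurable_fun setT (past_orbit m).
  exact: measurableT_comp (measurable_aff_orbit _ _ _ m mtheta mc)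
                          (measurable_iter _ mthinv m).
apply: ae_foralln => m; apply: ae_foralln => N; apply: ae_foralln => i.
apply: non_historic_cvgn => //; apply: integrable_indic.
rewrite -[X in measurable X]setTI.
exact: mpast _ measurableT _ (measurable_itv _).
Qed.

Lemma cvgn_mean_aff_orbit (phi : R -> R) w x : cancel theta thinv ->
  (forall j, 1/4/2 <= rtrans eps kappa (iter j theta w) <= 3/4/2) ->
  (forall m N i,
    cvgn (birkhoff_avg theta (\1_(past_orbit m @^-1` cell N i) : Om -> R) w)) ->
  1/4 <= x <= 3/4 -> continuous phi ->
  cvgn (cesaro_mean (phi \o aff_orbit theta (rtrans eps kappa) w x)).
Proof.
move=> thetaK cw cells x_I0 cphi.
apply: (cvgn_mean_shadow _ _ (fun m j => past_orbit m (iter j theta w)) cphi).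
- move=> j; move: (aff_orbit_itv _ _ j cw x_I0) => /andP[? ?].
  by apply/andP; split; lra.
- move=> e e0; have [m _ me] := near_infty_natSinv_expn_lt (PosNum e0).
  exists m; near=> j.
  have half_I0 : 1/4 <= (1/2 : R) <= 3/4 by apply/andP; split; lra.
  have mj : (m <= j)%N by near: j; exact: nbhs_infty_ge.
  have [dist /andP[? ?]] := aff_orbit_shadow _ _ m j thetaK cw x_I0 half_I0 mj.
  have /= := me m (leqnn m); rewrite /past_orbit.
  set t := (2 ^+ m)^-1 in dist * => ?.
  by split; [lra | apply/andP; split; lra].
- exact: cells.
Unshelve. all: by end_near.
Qed.

End past_orbit.

Theorem proposition1p3 (R : realType) (r : nat) (F0 : R -> R)
  (d : measure_display) (Om : measurableType d) (P : probability Om R)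
  (kappa : Om -> R) (eps : R) (theta : Om -> Om) :
  (1 <= r)%N ->
  circle_Cr_diffeo_lift r F0 ->
  (forall x : R, 1/4 <= x <= 3/4 ->
     exists k : int, F0 x = x / 2 + 1/4 + k%:~R) ->
  measurable_fun setT kappa ->
  {ae P, forall w, -1 <= kappa w <= 1} ->
  0 < eps < 1/8 ->
  measurably_invertible theta ->
  nonsingular P theta ->
  non_historic P theta ->
  {ae P, forall w, forall x : R, 1/4 <= x <= 3/4 ->
     ~ historic_behaviour F0 eps kappa theta w x}.
Proof.
move=> _ [_ [_ F0_lift]] F0_I0 mkappa kappa_bd /andP[eps0 eps1]
  [mtheta [thinv mthinv [thetaK _]]] ns nh.
have c_bd :
    {ae P, forall w j, 1/4/2 <= rtrans eps kappa (iter j theta w) <= 3/4/2}.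
  apply: (ae_iter _ _ mtheta ns (fun w => 1/4/2 <= rtrans eps kappa w <= 3/4/2)).
  apply: filterS kappa_bd => w /andP[? ?].
  by rewrite /rtrans; apply/andP; split; nra.
apply: filterS2 c_bd
  (ae_cvgn_past_orbit_cells _ _ _ thinv P mkappa mtheta mthinv nh).
move=> w cw cells x x_I0 [phi [cphi [phi1 ncvg]]]; apply/ncvg/cvg_ex.
pose orbit := aff_orbit theta (rtrans eps kappa) w x.
rewrite (_ : (fun n => _) = cesaro_mean (phi \o orbit)).
  exact: cvgn_mean_aff_orbit.
have phi1' y : phi (y + 1) = phi y + 0 by rewrite addr0.
apply/funext => n; congr (_ * _); apply: eq_bigr => j _ /=.
have [k ->] := rcomp_aff_orbit F0_I0 (lift_shift_int F0_lift) cw x_I0 j.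
by rewrite (shift_int _ _ phi1') mulr0 addr0.
Qed.
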